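(* Let $(\mathbf f,\mathbf g),(\mathbf f',\mathbf g')$ be models with $p=p_{\mathbf f,\mathbf g}$, $p'=p_{\mathbf f',\mathbf g'}$, and assume: (1) distinct labels $y_1,\dots,y_M\in\mathcal Y_{\mathrm{LLV}}\setminus\{y_0\}$ and distinct inputs $x_1,\dots,x_M\in\mathcal X_{\mathrm{LLV}}\setminus\{x_0\}$ are chosen such that $\mathbf L=[\mathbf g_0(y_1),\dots,\mathbf g_0(y_M)]$, $\mathbf L'=[\mathbf g'_0(y_1),\dots,\mathbf g'_0(y_M)]$, $\mathbf N=[\mathbf f_0(x_1),\dots,\mathbf f_0(x_M)]$, $\mathbf N'=[\mathbf f'_0(x_1),\dots,\mathbf f'_0(x_M)]$ are all invertible; (2) $p$ and $p'$ are both admissible; (3) with $x\sim p_{\mathcal D}$ and $y$ uniform on $\mathcal Y$, and $\mathbf z_1=\mathbf L^\top\mathbf f(x)$, $\mathbf z_2=\mathbf L'^\top\mathbf f'(x)$, $\mathbf w_1=\mathbf N^\top\mathbf g(y)$, $\mathbf w_2=\mathbf N'^\top\mathbf g'(y)$, the covariance matrices of the standardized vectors $\boldsymbol\Sigma_{\mathbf z_1'\mathbf z_1'},\boldsymbol\Sigma_{\mathbf w_1'\mathbf w_1'}$ and cross-covariance matrices $\boldsymbol\Sigma_{\mathbf z_1'\mathbf z_2'},\boldsymbol\Sigma_{\mathbf w_1'\mathbf w_2'}$ are non-singular. Then for every $\lambda>0$ and $\epsilon\ge0$, $$d^\lambda_{\mathrm{LLV}}(p,p')\le\epsilon\ \Longrightarrow\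 \max\big\{d_{\mathrm{SVD}}(\mathbf z_1,\mathbf z_2),\,d_{\mathrm{SVD}}(\mathbf w_1,\mathbf w_2)\big\}\le 2M\epsilon .$$
   Context: Let $\mathcal X$ be a set of inputs and $\mathcal Y$ a finite set of labels; fix $M\ge 1$. A model is a pair $(\mathbf f,\mathbf g)$ of functions $\mathbf f:\mathcal X\to\mathbb R^M$ (embedding) and $\mathbf g:\mathcal Y\to\mathbb R^M$ (unembedding); it defines $p_{\mathbf f,\mathbf g}(y\mid x)=\exp(\mathbf f(x)^\top\mathbf g(y))/\sum_{y'\in\mathcal Y}\exp(\mathbf f(x)^\top\mathbf g(y'))$. With pivot input $x_0$ and pivot label $y_0$, write $\mathbf f_0(x)=\mathbf f(x)-\mathbf f(x_0)$, $\mathbf g_0(y)=\mathbf g(y)-\mathbf g(y_0)$ (similarly primed). Fix a probability distribution $p_{\mathcal D}$ on $\mathcal X$; $\mathrm{Var}_x$ denotes variance with $x\sim p_{\mathcal D}$ and $\mathrm{Var}_y$ variance with $y$ uniform on $\mathcal Y$. Fix a finite set $\mathcal X_{\mathrm{LLV}}\subset\mathcal X$ containing $x_0$, and a set $\mathcal Y_{\mathrm{LLV}}\subset\mathcal Y$ containing $y_0$ and all labels of $\mathcal Y$ except exactly one. Consider conditional distributions $p(\cdot\mid x)$ on $\mathcal Y$ with all probabilities positive and $\log p(y\mid\cdot)$ square-integrable under $p_{\mathcal D}$. Define $\psi_x(y;p)=\sqrt{\mathrm{Var}_x[\log p(y\mid x)-\log p(y_0\mid x)]}$ and $\psi_y(x;p)=\sqrt{\mathrm{Var}_y[\log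 p(y\mid x)-\log p(y\mid x_0)]}$. Such a $p$ is admissible if (1) $p_{\mathcal D}(\{x\})>0$ for every $x\in\mathcal X_{\mathrm{LLV}}$, and for every $x\in\mathcal X_{\mathrm{LLV}}\setminus\{x_0\}$ the map $y\mapsto\log p(y\mid x)-\log p(y\mid x_0)$ is not constant on $\mathcal Y$; and (2) for every $y\in\mathcal Y_{\mathrm{LLV}}\setminus\{y_0\}$, $\mathrm{Var}_x[\log p(y\mid x)-\log p(y_0\mid x)]>0$. For admissible $p,p'$ and $\lambda>0$ define $t_1=\max_{y\in\mathcal Y_{\mathrm{LLV}}\setminus\{y_0\}}\max\Big\{\sqrt{\mathrm{Var}_x\big[\tfrac{\log p(y\mid x)}{\psi_x(y;p)}-\tfrac{\log p'(y\mid x)}{\psi_x(y;p')}\big]},\ \sqrt{\mathrm{Var}_x\big[\tfrac{\log p(y_0\mid x)}{\psi_x(y;p)}-\tfrac{\log p'(y_0\mid x)}{\psi_x(y;p')}\big]}\Big\}$, $t_2=\max_{x\in\mathcal X_{\mathrm{LLV}}\setminus\{x_0\}}\max\Big\{\sqrt{\mathrm{Var}_y\big[\tfrac{\log p(y\mid x)}{\psi_y(x;p)}-\tfrac{\log p'(y\mid x)}{\psi_y(x;p')}\big]},\ \sqrt{\mathrm{Var}_y\big[\tfrac{\log p(y\mid x_0)}{\psi_y(x;p)}-\tfrac{\log p'(y\mid x_0)}{\psi_y(x;p')}\big]}\Big\}$, $t_3=\max_{y\in\mathcal Y_{\mathrm{LLV}}\setminus\{y_0\}}|\psi_x(y;p)-\psi_x(y;p')|$,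 $t_4=\max_{x\in\mathcal X_{\mathrm{LLV}}\setminus\{x_0\}}|\psi_y(x;p)-\psi_y(x;p')|$, and $d^\lambda_{\mathrm{LLV}}(p,p')=\max\{t_1,t_2,\lambda t_3,\lambda t_4\}$. For $M$-dimensional random vectors $\mathbf z,\mathbf w$ (jointly distributed, components with finite positive variance), let $\mathbf z',\mathbf w'$ be the standardized vectors $z'_i=(z_i-\mathbb E[z_i])/\operatorname{std}(z_i)$, $w'_i=(w_i-\mathbb E[w_i])/\operatorname{std}(w_i)$, and let $\boldsymbol\Sigma_{\mathbf z'\mathbf w'}$ be the cross-covariance matrix with entries $\mathrm{Cov}[z'_i,w'_j]$. Let $\{\mathbf u_i\}_{i=1}^M$, $\{\mathbf v_i\}_{i=1}^M$ be the left and right singular vectors of $\boldsymbol\Sigma_{\mathbf z'\mathbf w'}$. Define $m_{\mathrm{SVD}}(\mathbf z,\mathbf w)=\frac1M\sum_{i=1}^M\mathrm{Cov}[\mathbf u_i^\top\mathbf z',\mathbf v_i^\top\mathbf w']$ (equivalently, $\frac1M$ times the sum of the singular values of $\boldsymbol\Sigma_{\mathbf z'\mathbf w'}$) and $d_{\mathrm{SVD}}(\mathbf z,\mathbf w)=1-m_{\mathrm{SVD}}(\mathbf z,\mathbf w)$. *)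

From HB Require Import structures.
From mathcomp Require Import all_boot all_order all_algebra.
From mathcomp Require Import all_classical all_reals all_analysis.
Set Implicit Arguments. Unset Strict Implicit. Unset Printing Implicit Defensive.
Import Order.TTheory GRing.Theory Num.Theory.
Local Open Scope classical_set_scope.
Local Open Scope ring_scope.

Section Defs.
Context {R : realType}.

Definition dotv {M : nat} (u v : 'rV[R]_M) : R := \sum_(i < M) u ord0 i * v ord0 i.

Definition model_p {X : Type} {Y : finType} {M : nat}
  (f : X -> 'rV[R]_M) (g : Y -> 'rV[R]_M) (x : X) (y : Y) : R :=
  expR (dotv (f x) (g y)) / \sum_(y' : Y) expR (dotv (f x) (g y')).

Definition Var_x {d} {X : measurableType d} (P : probability X R) (h : X -> R) : R :=
  fine ('V_P[h])%E.

Definition E_unif {Y : finType} (h : Y -> R) : R := (#|Y|%:R)^-1 * \sum_(y : Y) h y.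
Definition Var_y {Y : finType} (h : Y -> R) : R := E_unif (fun y => (h y - E_unif h) ^+ 2).

Definition sq_integrable {d} {X : measurableType d} (P : probability X R) (h : X -> R) :=
  measurable_fun setT h /\ P.-integrable setT (fun x => (h x ^+ 2)%:E).

Definition cond_dist_ok {d} {X : measurableType d} {Y : finType}
  (P : probability X R) (p : X -> Y -> R) :=
  (forall x y, 0 < p x y) /\ (forall y, sq_integrable P (fun x => ln (p x y))).

Definition admissible {d} {X : measurableType d} {Y : finType}
  (P : probability X R) (XLLV : seq X) (YLLV : {set Y}) (x0 : X) (y0 : Y)
  (p : X -> Y -> R) : Prop :=
  cond_dist_ok P p /\
  ((forall x, x \in XLLV -> measurable [set x] /\ (0 < P [set x])%E) /\
   (forall x, x \in XLLV -> x != x0 ->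
      ~ (exists c, forall y, ln (p x y) - ln (p x0 y) = c))) /\
  (forall y, y \in YLLV :\ y0 -> 0 < Var_x P (fun x => ln (p x y) - ln (p x y0))).

Definition psi_x {d} {X : measurableType d} {Y : finType}
  (P : probability X R) (y0 : Y) (p : X -> Y -> R) (y : Y) : R :=
  Num.sqrt (Var_x P (fun x => ln (p x y) - ln (p x y0))).

Definition psi_y {X : Type} {Y : finType} (x0 : X) (p : X -> Y -> R) (x : X) : R :=
  Num.sqrt (Var_y (fun y => ln (p x y) - ln (p x0 y))).

Definition t1 {d} {X : measurableType d} {Y : finType} (P : probability X R)
  (YLLV : {set Y}) (y0 : Y) (p p' : X -> Y -> R) : R :=
  \big[Num.max/0]_(y in YLLV :\ y0)
    Num.max
      (Num.sqrt (Var_x P (fun x => ln (p x y) / psi_x P y0 p y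
                               - ln (p' x y) / psi_x P y0 p' y)))
      (Num.sqrt (Var_x P (fun x => ln (p x y0) / psi_x P y0 p y
                               - ln (p' x y0) / psi_x P y0 p' y))).

Definition t2 {X : eqType} {Y : finType} (XLLV : seq X) (x0 : X)
  (p p' : X -> Y -> R) : R :=
  \big[Num.max/0]_(x <- XLLV | x != x0)
    Num.max
      (Num.sqrt (Var_y (fun y => ln (p x y) / psi_y x0 p x
                               - ln (p' x y) / psi_y x0 p' x)))
      (Num.sqrt (Var_y (fun y => ln (p x0 y) / psi_y x0 p x
                               - ln (p' x0 y) / psi_y x0 p' x))).

Definition t3 {d} {X : measurableType d} {Y : finType} (P : probability X R)
  (YLLV : {set Y}) (y0 : Y) (p p' : X -> Y -> R) : R :=
  \big[Num.max/0]_(y in YLLV :\ y0) `|psi_x P y0 p y - psi_x P y0 p' y|.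

Definition t4 {X : eqType} {Y : finType} (XLLV : seq X) (x0 : X)
  (p p' : X -> Y -> R) : R :=
  \big[Num.max/0]_(x <- XLLV | x != x0) `|psi_y x0 p x - psi_y x0 p' x|.

Definition d_LLV {d} {X : measurableType d} {Y : finType} (P : probability X R)
  (XLLV : seq X) (YLLV : {set Y}) (x0 : X) (y0 : Y) (lam : R)
  (p p' : X -> Y -> R) : R :=
  Num.max (Num.max (t1 P YLLV y0 p p') (t2 XLLV x0 p p'))
          (Num.max (lam * t3 P YLLV y0 p p') (lam * t4 XLLV x0 p p')).

Definition covE {T : Type} (E : (T -> R) -> R) (a b : T -> R) : R :=
  E (fun t => (a t - E a) * (b t - E b)).
Definition stdE {T : Type} (E : (T -> R) -> R) (a : T -> R) : R := Num.sqrt (covE E a a).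
Definition stdzE {T : Type} {M : nat} (E : (T -> R) -> R) (z : T -> 'rV[R]_M) (i : 'I_M)
  : T -> R := fun t => (z t ord0 i - E (fun s => z s ord0 i)) / stdE E (fun s => z s ord0 i).
Definition crosscov {T : Type} {M : nat} (E : (T -> R) -> R) (z w : T -> 'rV[R]_M)
  : 'M[R]_M := \matrix_(i, j) covE E (stdzE E z i) (stdzE E w j).

Definition is_svd {M : nat} (A U : 'M[R]_M) (s : 'rV[R]_M) (V : 'M[R]_M) : Prop :=
  U^T *m U = 1%:M /\ V^T *m V = 1%:M /\ (forall i, 0 <= s ord0 i) /\
  A = U *m diag_mx s *m V^T.

Definition m_SVD {T : Type} {M : nat} (E : (T -> R) -> R) (z w : T -> 'rV[R]_M)
  (U V : 'M[R]_M) : R :=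
  (M%:R)^-1 * \sum_(i < M)
     covE E (fun t => \sum_(k < M) U k i * stdzE E z k t)
            (fun t => \sum_(k < M) V k i * stdzE E w k t).
Definition d_SVD {T : Type} {M : nat} (E : (T -> R) -> R) (z w : T -> 'rV[R]_M)
  (U V : 'M[R]_M) : R := 1 - m_SVD E z w U V.

Definition E_x {d} {X : measurableType d} (P : probability X R) (h : X -> R) : R :=
  fine ('E_P[h])%E.

End Defs.

From HB Require Import structures.
From mathcomp Require Import all_boot all_order all_algebra.
From mathcomp Require Import all_classical all_reals all_analysis.
From mathcomp Require Import ring lra.
Import Order.TTheory GRing.Theory Num.Theory.
Set Implicit Arguments. Unset Strict Implicit. Unset Printing Implicit Defensive.
Local Open Scope classical_set_scope.
Local Open Scope ring_scope.

(* Since the log-partition function cancels, the k-th coordinate of f(x)^T L is the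
   log-ratio log p(y_k|x) - log p(y_0|x); symmetrically, that of g(y)^T N is
   log p(y|x_k) - log p(y|x_0) up to a constant.  After standardization, the k-th
   coordinates X, Y of the two models differ, up to a constant, by D1 - D0, where D1 and
   D0 are normalized log-likelihood differences of standard deviation at most eps.  Hence
   Var(X - Y) <= 4 eps^2, i.e. Corr(X, Y) >= 1 - 2 eps^2 >= 1 - 2 eps (the correlation
   being >= -1 anyway).  The trace of the standardized cross-covariance matrix is thus
   at least M (1 - 2 eps), and it is bounded by the sum of the singular values. *)

Lemma orthogonal_col_norm {R : realType} (M : nat) (U : 'M[R]_M) j :
  U^T *m U = 1%:M -> \sum_i U i j ^+ 2 = 1.
Proof.
move=> hU; have := congr1 (fun A : 'M[R]_M => A j j) hU.
rewrite !mxE eqxx mulr1n => <-; apply: eq_bigr => i _; rewrite mxE; ring.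
Qed.

Lemma svd_diag {R : realType} (M : nat) (A U V : 'M[R]_M) (s : 'rV[R]_M) i :
  is_svd A U s V -> (U^T *m A *m V) i i = s ord0 i.
Proof.
move=> [hU [hV [_ ->]]].
by rewrite !mulmxA hU mul1mx -mulmxA hV mulmx1 mxE eqxx mulr1n.
Qed.

Lemma mxtrace_le_sum_svd {R : realType} (M : nat) (A U V : 'M[R]_M) (s : 'rV[R]_M) :
  is_svd A U s V -> \tr A <= \sum_i s ord0 i.
Proof.
move=> [hU [hV [s_ge0 ->]]].
rewrite -mulmxA mxtrace_mulC -mulmxA /mxtrace; apply: ler_sum => j _.
rewrite mul_diag_mx mxE mxE -[leRHS]mulr1 ler_wpM2l //.
have <- : \sum_i (U i j ^+ 2 + V i j ^+ 2) / 2 = 1.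
  by rewrite -mulr_suml big_split /= !orthogonal_col_norm //; field.
apply: ler_sum => i _; rewrite mxE.
by have := sqr_ge0 (U i j - V i j); rewrite sqrrB; lra.
Qed.

(* A class G of functions on which the covariance induced by the expectation E is a
   symmetric positive semidefinite bilinear form; instances are the square-integrable
   functions for x ~ P and all functions for y uniform. *)
Record cov_space {R : realType} {T : Type} (E : (T -> R) -> R) (G : (T -> R) -> Prop)
  : Prop := CovSpace {
  cov_space_cst : forall c, G (fun _ => c);
  cov_space_lin : forall k a b, G a -> G b -> G (fun t => k * a t + b t);
  covE_linl : forall k a b h, G a -> G b -> G h ->
    covE E (fun t => k * a t + b t) h = k * covE E a h + covE E b h;
  covE_cstl : forall c h, G h -> covE E (fun _ => c) h = 0;
  covEC : forall a b, G a -> G b -> covE E a b = covE E b a;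
  covE_ge0 : forall a, G a -> 0 <= covE E a a }.

Definition stdz {R : realType} {T : Type} (E : (T -> R) -> R) (a : T -> R) : T -> R :=
  fun t => (a t - E a) / stdE E a.

Definition corr {R : realType} {T : Type} (E : (T -> R) -> R) (a b : T -> R) : R :=
  covE E (stdz E a) (stdz E b).

(* The summand of t1 at a label y (resp. of t2 at an input x) when A1, A0, B1, B0 are
   log p(y|.), log p(y0|.), log p'(y|.), log p'(y0|.) (resp. log p(.|x), log p(.|x0), ...). *)
Definition normalized_gap {R : realType} {T : Type} (E : (T -> R) -> R)
  (A1 A0 B1 B0 : T -> R) : R :=
  let sa := stdE E (fun t => A1 t - A0 t) in
  let sb := stdE E (fun t => B1 t - B0 t) in
  Num.max (stdE E (fun t => A1 t / sa - B1 t / sb)) (stdE E (fun t => A0 t / sa - B0 t / sb)).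

Section CovarianceAlgebra.
Context {R : realType} {T : Type} (E : (T -> R) -> R) (G : (T -> R) -> Prop).
Hypothesis EG : cov_space E G.
Local Notation C := (covE E).

Lemma cov_space_affine al ka u : G u -> G (fun t => al * u t + ka).
Proof. by move=> Gu; apply: (cov_space_lin EG) => //; apply: (cov_space_cst EG). Qed.

Lemma cov_space_comb al be ka u v : G u -> G v -> G (fun t => al * u t + be * v t + ka).
Proof.
move=> Gu Gv; have -> : (fun t => al * u t + be * v t + ka) =
                        (fun t => al * u t + (be * v t + ka)).
  by apply: funext => t; rewrite addrA.
by apply: (cov_space_lin EG) => //; apply: cov_space_affine.
Qed.

Lemma cov_space_sub k u v : G u -> G v -> G (fun t => u t - v t + k).
Proof.
move=> Gu Gv; have -> : (fun t => u t - v t + k) = (fun t => 1 * u t + (-1) * v t + k).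
  by apply: funext => t; ring.
exact: cov_space_comb.
Qed.

Lemma covE_combl al be ka u v h : G u -> G v -> G h ->
  C (fun t => al * u t + be * v t + ka) h = al * C u h + be * C v h.
Proof.
move=> Gu Gv Gh; have -> : (fun t => al * u t + be * v t + ka) =
                           (fun t => al * u t + (be * v t + ka)).
  by apply: funext => t; rewrite addrA.
rewrite (covE_linl EG) //; last by apply: cov_space_affine.
by rewrite (covE_linl EG) ?(covE_cstl EG) ?addr0 //; apply: (cov_space_cst EG).
Qed.

Lemma covE_comb al be ka u v : G u -> G v ->
  C (fun t => al * u t + be * v t + ka) (fun t => al * u t + be * v t + ka) =
  al ^+ 2 * C u u + 2 * al * be * C u v + be ^+ 2 * C v v.
Proof.
move=> Gu Gv; have Gw := cov_space_comb al be ka Gu Gv.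
rewrite covE_combl // (covEC EG Gu Gw) (covEC EG Gv Gw) !covE_combl // (covEC EG Gv Gu).
ring.
Qed.

Lemma covE_affine al ka u : G u ->
  C (fun t => al * u t + ka) (fun t => al * u t + ka) = al ^+ 2 * C u u.
Proof.
move=> Gu; have -> : (fun t => al * u t + ka) = (fun t => al * u t + 0 * u t + ka).
  by apply: funext => t; ring.
by rewrite covE_comb //; ring.
Qed.

Lemma covE_subr_sqr u v ka : G u -> G v ->
  C (fun t => u t - v t + ka) (fun t => u t - v t + ka) = C u u - 2 * C u v + C v v.
Proof.
move=> Gu Gv; have -> : (fun t => u t - v t + ka) = (fun t => 1 * u t + (-1) * v t + ka).
  by apply: funext => t; ring.
by rewrite covE_comb //; ring.
Qed.

Lemma covE_ge_opp u v : G u -> G v -> - (2 * C u v) <= C u u + C v v.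
Proof.
move=> Gu Gv; have := covE_ge0 EG (cov_space_comb 1 1 0 Gu Gv).
by rewrite covE_comb //; lra.
Qed.

Lemma covE_le_sqr a eps : G a -> stdE E a <= eps -> C a a <= eps ^+ 2.
Proof.
move=> Ga h; rewrite -[C a a](@sqr_sqrtr _ (C a a)) ?(covE_ge0 EG) //.
by rewrite lerXn2r // ?nnegrE ?sqrtr_ge0 // (le_trans (sqrtr_ge0 _) h).
Qed.

Lemma stdE_addr_cst u k : G u -> stdE E (fun t => u t + k) = stdE E u.
Proof.
move=> Gu; rewrite /stdE (_ : (fun t => u t + k) = (fun t => 1 * u t + k)).
  by rewrite covE_affine // expr1n mul1r.
by apply: funext => t; rewrite mul1r.
Qed.

Lemma stdz_affine a : stdz E a = (fun t => (stdE E a)^-1 * a t - E a / stdE E a).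
Proof. by apply: funext => t; rewrite /stdz; ring. Qed.

Lemma cov_space_stdz a : G a -> G (stdz E a).
Proof. by move=> Ga; rewrite stdz_affine; apply: cov_space_affine. Qed.

Lemma covE_stdz a : G a -> 0 < C a a -> C (stdz E a) (stdz E a) = 1.
Proof.
move=> Ga Ca; rewrite stdz_affine covE_affine // -[C a a](@sqr_sqrtr _ (C a a)) ?ltW //.
by rewrite /stdE; field; rewrite gt_eqF ?sqrtr_gt0.
Qed.

(* 2 (1 - C X Y) = C (X - Y) (X - Y) <= 2 (C D1 D1 + C D0 D0) <= 4 eps^2,
   and 1 - C X Y <= 2 holds anyway. *)
Lemma one_sub_covE_le X Y D1 D0 c eps : G X -> G Y -> G D1 -> G D0 ->
  C X X = 1 -> C Y Y = 1 -> (forall t, X t - Y t = D1 t - D0 t + c) ->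
  stdE E D1 <= eps -> stdE E D0 <= eps -> 1 - C X Y <= 2 * eps.
Proof.
move=> GX GY GD1 GD0 CX CY eXY h1 h0.
have := covE_subr_sqr 0 GX GY.
rewrite CX CY (_ : (fun t => X t - Y t + 0) = (fun t => D1 t - D0 t + c)); last first.
  by apply: funext => t; rewrite addr0.
rewrite covE_subr_sqr // => eC.
have := covE_ge_opp GD1 GD0; have := covE_ge_opp GX GY.
have := covE_le_sqr GD1 h1; have := covE_le_sqr GD0 h0.
have e0 : 0 <= eps := le_trans (sqrtr_ge0 _) h1.
nra.
Qed.

Lemma one_sub_corr_le (A1 A0 B1 B0 a b : T -> R) ka kb eps :
  G A1 -> G A0 -> G B1 -> G B0 ->
  (forall t, a t = A1 t - A0 t + ka) -> (forall t, b t = B1 t - B0 t + kb) ->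
  0 < C (fun t => A1 t - A0 t) (fun t => A1 t - A0 t) ->
  0 < C (fun t => B1 t - B0 t) (fun t => B1 t - B0 t) ->
  normalized_gap E A1 A0 B1 B0 <= eps -> 1 - corr E a b <= 2 * eps.
Proof.
move=> GA1 GA0 GB1 GB0 ea eb Cu Cv; rewrite /normalized_gap ge_max => /andP[h1 h0].
have Gu : G (fun t => A1 t - A0 t).
  by have := cov_space_sub 0 GA1 GA0; congr G; apply: funext => t; rewrite addr0.
have Gv : G (fun t => B1 t - B0 t).
  by have := cov_space_sub 0 GB1 GB0; congr G; apply: funext => t; rewrite addr0.
have Ga : G a by rewrite (funext ea); apply: cov_space_sub.
have Gb : G b by rewrite (funext eb); apply: cov_space_sub.
have std_a : stdE E a = stdE E (fun t => A1 t - A0 t) by rewrite (funext ea) stdE_addr_cst.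
have std_b : stdE E b = stdE E (fun t => B1 t - B0 t) by rewrite (funext eb) stdE_addr_cst.
set sa := stdE E (fun t => A1 t - A0 t) in h1 h0 std_a.
set sb := stdE E (fun t => B1 t - B0 t) in h1 h0 std_b.
apply: (one_sub_covE_le (c := (ka - E a) / sa - (kb - E b) / sb) _ _ _ _ _ _ _ h1 h0).
- exact: cov_space_stdz.
- exact: cov_space_stdz.
- by have := cov_space_comb sa^-1 (- sb^-1) 0 GA1 GB1; congr G; apply: funext => t; ring.
- by have := cov_space_comb sa^-1 (- sb^-1) 0 GA0 GB0; congr G; apply: funext => t; ring.
- by apply: covE_stdz; rewrite // -sqrtr_gt0 -/(stdE E a) std_a sqrtr_gt0.
- by apply: covE_stdz; rewrite // -sqrtr_gt0 -/(stdE E b) std_b sqrtr_gt0.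
- by move=> t; rewrite /stdz std_a std_b ea eb; ring.
Qed.

Lemma cov_space_sum (I : Type) (r : seq I) (al : I -> R) (F : I -> T -> R) :
  (forall k, G (F k)) -> G (fun t => \sum_(k <- r) al k * F k t).
Proof.
move=> GF; elim: r => [|i r IH].
  by under eq_fun do rewrite big_nil; apply: (cov_space_cst EG).
by under eq_fun do rewrite big_cons; apply: (cov_space_lin EG).
Qed.

Lemma covE_suml (I : Type) (r : seq I) (al : I -> R) (F : I -> T -> R) h :
  (forall k, G (F k)) -> G h ->
  C (fun t => \sum_(k <- r) al k * F k t) h = \sum_(k <- r) al k * C (F k) h.
Proof.
move=> GF Gh; elim: r => [|i r IH].
  by under eq_fun do rewrite big_nil; rewrite big_nil (covE_cstl EG).
under eq_fun do rewrite big_cons.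
by rewrite big_cons (covE_linl EG) ?IH //; apply: cov_space_sum.
Qed.

Lemma covE_sumr (I : Type) (r : seq I) (al : I -> R) (F : I -> T -> R) h :
  (forall k, G (F k)) -> G h ->
  C h (fun t => \sum_(k <- r) al k * F k t) = \sum_(k <- r) al k * C h (F k).
Proof.
move=> GF Gh; rewrite (covEC EG) ?covE_suml //; last exact: cov_space_sum.
by apply: eq_bigr => k _; rewrite (covEC EG).
Qed.

Lemma m_SVD_sum_svd (M : nat) (z w : T -> 'rV[R]_M) U s V :
  (forall k, G (stdzE E z k)) -> (forall k, G (stdzE E w k)) ->
  is_svd (crosscov E z w) U s V -> m_SVD E z w U V = M%:R^-1 * \sum_i s ord0 i.
Proof.
move=> Gz Gw hs; congr (_ * _); apply: eq_bigr => i _.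
rewrite -(svd_diag i hs) covE_suml //; last exact: cov_space_sum.
transitivity (\sum_k \sum_l U k i * crosscov E z w k l * V l i).
  apply: eq_bigr => k _; rewrite covE_sumr // mulr_sumr.
  by apply: eq_bigr => l _; rewrite [crosscov _ _ _ _ _]mxE; ring.
rewrite mxE exchange_big; apply: eq_bigr => l _; rewrite mxE mulr_suml.
by apply: eq_bigr => k _; rewrite !mxE.
Qed.

Lemma d_SVD_le (M : nat) (z w : T -> 'rV[R]_M) U s V e :
  (0 < M)%N -> (forall k, G (stdzE E z k)) -> (forall k, G (stdzE E w k)) ->
  is_svd (crosscov E z w) U s V -> (forall k, 1 - crosscov E z w k k <= e) ->
  d_SVD E z w U V <= e.
Proof.
move=> M_gt0 Gz Gw hs he; rewrite /d_SVD (m_SVD_sum_svd Gz Gw hs).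
have M_gt0' : 0 < M%:R :> R by rewrite ltr0n.
have h : \sum_(k < M) (1 - crosscov E z w k k) <= \sum_(k < M) e by apply: ler_sum.
rewrite big_split sumrN /= !sumr_const card_ord -[e *+ _]mulr_natr in h.
have := mxtrace_le_sum_svd hs; rewrite /mxtrace => htr.
have hS : M%:R * (1 - e) <= \sum_i s ord0 i by lra.
have := ler_wpM2l (ltW (_ : 0 < M%:R^-1)) hS; rewrite ?invr_gt0 //.
rewrite mulrA mulVf ?gt_eqF // mul1r; lra.
Qed.

Lemma d_SVD_le_normalized_gap (M : nat) (z w : T -> 'rV[R]_M) (A B : 'I_M -> T -> R)
    (A0 B0 : T -> R) (ka kb : 'I_M -> R) U s V eps :
  (0 < M)%N -> is_svd (crosscov E z w) U s V ->
  (forall k, G (A k)) -> G A0 -> (forall k, G (B k)) -> G B0 ->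
  (forall k t, z t ord0 k = A k t - A0 t + ka k) ->
  (forall k t, w t ord0 k = B k t - B0 t + kb k) ->
  (forall k, 0 < C (fun t => A k t - A0 t) (fun t => A k t - A0 t)) ->
  (forall k, 0 < C (fun t => B k t - B0 t) (fun t => B k t - B0 t)) ->
  (forall k, normalized_gap E (A k) A0 (B k) B0 <= eps) ->
  d_SVD E z w U V <= 2 * eps.
Proof.
move=> M_gt0 hs GA GA0 GB GB0 ez ew CA CB gap.
have Gstdz (v : T -> 'rV[R]_M) (F : 'I_M -> T -> R) F0 c :
    (forall k, G (F k)) -> G F0 -> (forall k t, v t ord0 k = F k t - F0 t + c k) ->
    forall k, G (stdzE E v k).
  move=> GF GF0 ev k; apply: cov_space_stdz.
  by rewrite (_ : (fun t => _) = fun t => F k t - F0 t + c k); [apply: cov_space_sub|apply: funext].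
apply: (d_SVD_le M_gt0 _ _ hs); [exact: Gstdz ez|exact: Gstdz ew|move=> k].
by rewrite mxE; apply: one_sub_corr_le (ez k) (ew k) (CA k) (CB k) (gap k).
Qed.

End CovarianceAlgebra.

Lemma covE_E_x {R : realType} d (X : measurableType d) (P : probability X R) (a b : X -> R) :
  covE (E_x P) a b = fine (covariance P a b).
Proof. by rewrite /covE /E_x covariance.unlock. Qed.

Lemma Var_xE {R : realType} d (X : measurableType d) (P : probability X R) (h : X -> R) :
  Var_x P h = covE (E_x P) h h.
Proof. by rewrite covE_E_x. Qed.

Lemma cov_space_Lfun2 {R : realType} d (X : measurableType d) (P : probability X R) :
  cov_space (E_x P) (fun a => a \in Lfun P 2%:E).
Proof.
have L21 := Lfun_subset12 (fin_num_measure P _ measurableT).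
have L2scale k a : a \in Lfun P 2%:E -> (k \o* a) \in Lfun P 2%:E.
  by move=> Ga; apply: (Lfun_scale k _ Ga); rewrite ler1n.
have cov_fin u v : u \in Lfun P 2%:E -> v \in Lfun P 2%:E -> covariance P u v \is a fin_num.
  by move=> Gu Gv; apply: covariance_fin_num; [exact: L21|exact: L21|exact: Lfun2_mul_Lfun1].
split.
- by move=> c; apply: Lfun_cst.
- move=> k a b Ga Gb.
  have -> : (fun t => k * a t + b t) = ((k \o* a) + b)%R by apply: funext => t; rewrite !fctE mulrC.
  apply: rpredD => //; first by rewrite lee_fin ler1n.
  by move=> ?; apply: L2scale.
- move=> k a b h Ga Gb Gh; rewrite !covE_E_x.
  have -> : (fun t => k * a t + b t) = ((k \o* a) \+ b)%R by apply: funext => t; rewrite /= mulrC.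
  rewrite covarianceDl ?L2scale // covarianceZl; [|exact: L21|exact: L21|exact: Lfun2_mul_Lfun1].
  by rewrite fineD ?fin_numM ?cov_fin // fineM ?cov_fin.
- by move=> c h _; rewrite covE_E_x covariance_cst_l.
- by move=> a b _ _; rewrite !covE_E_x covarianceC.
- by move=> a _; rewrite covE_E_x fine_ge0 // (variance_ge0 P a).
Qed.

Lemma sq_integrable_Lfun2 {R : realType} d (X : measurableType d) (P : probability X R)
  (h : X -> R) : sq_integrable P h -> h \in Lfun P 2%:E.
Proof.
move=> [mh /integrableP [_ ih]]; rewrite inE; apply/andP; split; rewrite inE //=.
rewrite /finite_norm unlock /=; apply: poweR_lty; apply: le_lt_trans ih.
rewrite le_eqVlt; apply/orP; left; apply/eqP; apply: eq_integral => x _.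
rewrite gee0_abs ?lee_fin ?sqr_ge0 //; congr (_%:E).
by rewrite -[2]/(2%:R) powR_mulrn // real_normK // num_real.
Qed.

Section UniformLaw.
Context {R : realType} {Y : finType} (y0 : Y).

Lemma E_unif_lin k (a b : Y -> R) :
  E_unif (fun t => k * a t + b t) = k * E_unif a + E_unif b.
Proof. by rewrite /E_unif big_split /= -mulr_sumr; ring. Qed.

Lemma E_unif_cst (c : R) : E_unif (fun _ : Y => c) = c.
Proof.
rewrite /E_unif sumr_const -[c *+ _]mulr_natl mulrA mulVf ?mul1r //.
by rewrite pnatr_eq0 -lt0n; apply/card_gt0P; exists y0.
Qed.

Lemma cov_space_unif : cov_space (@E_unif R Y) (fun _ => True).
Proof.
split => //.
- move=> k a b h _ _ _; rewrite /covE E_unif_lin -[RHS]E_unif_lin.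
  by congr E_unif; apply: funext => t; ring.
- move=> c h _; rewrite /covE E_unif_cst.
  by under eq_fun do rewrite subrr mul0r; rewrite E_unif_cst.
- by move=> a b _ _; rewrite /covE; congr E_unif; apply: funext => t; ring.
- move=> a _; rewrite /covE /E_unif mulr_ge0 // ?invr_ge0 //.
  by apply: sumr_ge0 => t _; rewrite -expr2 sqr_ge0.
Qed.

Lemma Var_yE (h : Y -> R) : Var_y h = covE (@E_unif R Y) h h.
Proof. by rewrite /Var_y /covE; congr E_unif; apply: funext => t; rewrite expr2. Qed.

Lemma Var_y_gt0 (h : Y -> R) : ~ (exists c, forall y, h y = c) -> 0 < Var_y h.
Proof.
move=> nonconst; rewrite lt_def Var_yE (covE_ge0 cov_space_unif) // andbT.
apply/eqP => h0; apply: nonconst; exists (E_unif h) => y.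
move: h0; rewrite -Var_yE /Var_y /E_unif => /eqP; rewrite mulf_eq0 invr_eq0 pnatr_eq0.
have cY : #|Y| != 0%N by rewrite -lt0n; apply/card_gt0P; exists y0.
rewrite (negbTE cY) /= psumr_eq0; last by move=> i _; apply: sqr_ge0.
move=> /allP /(_ y (mem_index_enum y)) /implyP /(_ isT).
by rewrite sqrf_eq0 subr_eq0 => /eqP.
Qed.

End UniformLaw.

Definition log_partition {R : realType} {X : Type} {Y : finType} {M : nat}
  (f : X -> 'rV[R]_M) (g : Y -> 'rV[R]_M) (x : X) : R :=
  ln (\sum_(y : Y) expR (dotv (f x) (g y))).

Section SoftmaxModel.
Context {R : realType} {X : Type} {Y : finType} {M : nat}.
Variables (f : X -> 'rV[R]_M) (g : Y -> 'rV[R]_M).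

Lemma ln_model_p x y : ln (model_p f g x y) = dotv (f x) (g y) - log_partition f g x.
Proof.
rewrite /model_p ln_div ?expRK // ?posrE ?expR_gt0 //.
by rewrite (bigD1 y) //= ltr_pwDl ?expR_gt0 // sumr_ge0.
Qed.

Lemma embedding_coord (ys : 'I_M -> Y) y0 x k :
  (f x *m \matrix_(k0, i) (g (ys i) - g y0) ord0 k0) ord0 k =
  ln (model_p f g x (ys k)) - ln (model_p f g x y0).
Proof.
rewrite !ln_model_p opprB addrA subrK /dotv -sumrB mxE.
by apply: eq_bigr => i _; rewrite !mxE mulrBr.
Qed.

Lemma unembedding_coord (xs : 'I_M -> X) x0 y k :
  (g y *m \matrix_(k0, i) (f (xs i) - f x0) ord0 k0) ord0 k =
  ln (model_p f g (xs k) y) - ln (model_p f g x0 y) +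
  (log_partition f g (xs k) - log_partition f g x0).
Proof.
rewrite !ln_model_p (_ : forall a b c e : R, a - c - (b - e) + (c - e) = a - b);
  last by move=> *; ring.
by rewrite /dotv -sumrB mxE; apply: eq_bigr => i _; rewrite !mxE; ring.
Qed.

End SoftmaxModel.

Section LLVBounds.
Context {R : realType} d {X : measurableType d} {Y : finType} (P : probability X R).
Variables (XLLV : seq X) (YLLV : {set Y}) (x0 : X) (y0 : Y).

Lemma normalized_gap_le_t1 (p p' : X -> Y -> R) y eps :
  t1 P YLLV y0 p p' <= eps -> y \in YLLV :\ y0 ->
  normalized_gap (E_x P) (fun x => ln (p x y)) (fun x => ln (p x y0))
    (fun x => ln (p' x y)) (fun x => ln (p' x y0)) <= eps.
Proof.
move=> ht1 hy; apply: (le_trans _ ht1); rewrite /t1 /normalized_gap /stdE -!Var_xE.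
by apply: le_bigmax_cond.
Qed.

Lemma normalized_gap_le_t2 (p p' : X -> Y -> R) x eps :
  t2 XLLV x0 p p' <= eps -> x \in XLLV -> x != x0 ->
  normalized_gap (@E_unif R Y) (fun y => ln (p x y)) (fun y => ln (p x0 y))
    (fun y => ln (p' x y)) (fun y => ln (p' x0 y)) <= eps.
Proof.
move=> ht2 hx hx0; apply: (le_trans _ ht2); rewrite /t2 /normalized_gap /stdE -!Var_yE.
by apply: (le_bigmax_seq 0 x (fun x => x != x0)) hx hx0.
Qed.

End LLVBounds.

Section FeatureIdentifiability.
Context {R : realType} d {X : measurableType d} {Y : finType} {M : nat} (P : probability X R).
Variables (XLLV : seq X) (YLLV : {set Y}) (x0 : X) (y0 : Y).
Variables (f f' : X -> 'rV[R]_M) (g g' : Y -> 'rV[R]_M).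
Hypothesis M_gt0 : (0 < M)%N.
Hypothesis adm : admissible P XLLV YLLV x0 y0 (model_p f g).
Hypothesis adm' : admissible P XLLV YLLV x0 y0 (model_p f' g').

Lemma d_SVD_embedding_le (ys : 'I_M -> Y) U s V eps :
  (forall i, ys i \in YLLV :\ y0) ->
  let z1 := fun x => f x *m \matrix_(k, i) (g (ys i) - g y0) ord0 k in
  let z2 := fun x => f' x *m \matrix_(k, i) (g' (ys i) - g' y0) ord0 k in
  is_svd (crosscov (E_x P) z1 z2) U s V ->
  t1 P YLLV y0 (model_p f g) (model_p f' g') <= eps ->
  d_SVD (E_x P) z1 z2 U V <= 2 * eps.
Proof.
case: adm => [[_ sq] [_ var]]; case: adm' => [[_ sq'] [_ var']].
move=> ysY z1 z2 hs ht1.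
apply: (d_SVD_le_normalized_gap (cov_space_Lfun2 P)
  (A := fun k x => ln (model_p f g x (ys k))) (A0 := fun x => ln (model_p f g x y0))
  (B := fun k x => ln (model_p f' g' x (ys k))) (B0 := fun x => ln (model_p f' g' x y0))
  (ka := fun=> 0) (kb := fun=> 0) M_gt0 hs).
- by move=> k; apply/sq_integrable_Lfun2/sq.
- exact/sq_integrable_Lfun2/sq.
- by move=> k; apply/sq_integrable_Lfun2/sq'.
- exact/sq_integrable_Lfun2/sq'.
- by move=> k t; rewrite addr0 embedding_coord.
- by move=> k t; rewrite addr0 embedding_coord.
- by move=> k; rewrite -Var_xE; apply/var/ysY.
- by move=> k; rewrite -Var_xE; apply/var'/ysY.
- by move=> k; apply: (normalized_gap_le_t1 ht1 (ysY k)).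
Qed.

Lemma d_SVD_unembedding_le (xs : 'I_M -> X) U s V eps :
  (forall i, xs i \in XLLV /\ xs i != x0) ->
  let w1 := fun y => g y *m \matrix_(k, i) (f (xs i) - f x0) ord0 k in
  let w2 := fun y => g' y *m \matrix_(k, i) (f' (xs i) - f' x0) ord0 k in
  is_svd (crosscov (@E_unif R Y) w1 w2) U s V ->
  t2 XLLV x0 (model_p f g) (model_p f' g') <= eps ->
  d_SVD (@E_unif R Y) w1 w2 U V <= 2 * eps.
Proof.
case: adm => [_ [[_ nonconst] _]]; case: adm' => [_ [[_ nonconst'] _]].
move=> xsX w1 w2 hs ht2.
apply: (d_SVD_le_normalized_gap (cov_space_unif y0)
  (A := fun k y => ln (model_p f g (xs k) y)) (A0 := fun y => ln (model_p f g x0 y))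
  (B := fun k y => ln (model_p f' g' (xs k) y)) (B0 := fun y => ln (model_p f' g' x0 y))
  (ka := fun k => log_partition f g (xs k) - log_partition f g x0)
  (kb := fun k => log_partition f' g' (xs k) - log_partition f' g' x0) M_gt0 hs) => //.
- by move=> k t; rewrite unembedding_coord.
- by move=> k t; rewrite unembedding_coord.
- move=> k; rewrite -Var_yE; apply: (Var_y_gt0 y0); case: (xsX k) => *; exact: nonconst.
- move=> k; rewrite -Var_yE; apply: (Var_y_gt0 y0); case: (xsX k) => *; exact: nonconst'.
- by move=> k; case: (xsX k) => xk xk0; apply: (normalized_gap_le_t2 ht2 xk xk0).
Qed.

End FeatureIdentifiability.

Theorem mainTheorem10 (R : realType) (d : measure_display) (X : measurableType d)
  (Y : finType) (M : nat) (P : probability X R)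
  (XLLV : seq X) (YLLV : {set Y}) (x0 : X) (y0 : Y)
  (f f' : X -> 'rV[R]_M) (g g' : Y -> 'rV[R]_M)
  (xs : 'I_M -> X) (ys : 'I_M -> Y) (lam eps : R)
  (U1 V1 U2 V2 : 'M[R]_M) (s1 s2 : 'rV[R]_M) :
  (0 < M)%N ->
  x0 \in XLLV -> y0 \in YLLV -> #|~: YLLV| = 1%N ->
  (* (1) *)
  injective ys -> (forall i, ys i \in YLLV :\ y0) ->
  injective xs -> (forall i, xs i \in XLLV /\ xs i != x0) ->
  let L  := \matrix_(k, i) (g  (ys i) - g  y0) ord0 k in
  let L' := \matrix_(k, i) (g' (ys i) - g' y0) ord0 k in
  let N  := \matrix_(k, i) (f  (xs i) - f  x0) ord0 k in
  let N' := \matrix_(k, i) (f' (xs i) - f' x0) ord0 k in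
  L \in unitmx -> L' \in unitmx -> N \in unitmx -> N' \in unitmx ->
  (* (2) *)
  let p  := model_p f g in
  let p' := model_p f' g' in
  admissible P XLLV YLLV x0 y0 p -> admissible P XLLV YLLV x0 y0 p' ->
  (* (3) *)
  let z1 := fun x => f x *m L in
  let z2 := fun x => f' x *m L' in
  let w1 := fun y => g y *m N in
  let w2 := fun y => g' y *m N' in
  crosscov (E_x P) z1 z1 \in unitmx -> crosscov (@E_unif R Y) w1 w1 \in unitmx ->
  crosscov (E_x P) z1 z2 \in unitmx -> crosscov (@E_unif R Y) w1 w2 \in unitmx ->
  (* SVDs of the two cross-covariance matrices *)
  is_svd (crosscov (E_x P) z1 z2) U1 s1 V1 ->
  is_svd (crosscov (@E_unif R Y) w1 w2) U2 s2 V2 ->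
  0 < lam -> 0 <= eps ->
  d_LLV P XLLV YLLV x0 y0 lam p p' <= eps ->
  Num.max (d_SVD (E_x P) z1 z2 U1 V1) (d_SVD (@E_unif R Y) w1 w2 U2 V2)
    <= 2 * M%:R * eps.
Proof.
move=> M_gt0 _ _ _ _ ysY _ xsX L L' N N' _ _ _ _ p p' adm adm' z1 z2 w1 w2 _ _ _ _
  svd1 svd2 _ eps_ge0.
rewrite /d_LLV !ge_max => /andP[/andP[ht1 ht2] _].
have le_2M : 2 * eps <= 2 * M%:R * eps by rewrite -mulrA ler_wpM2l // ler_peMl // ler1n.
apply/andP; split; apply: le_trans le_2M.
- exact: (d_SVD_embedding_le M_gt0 adm adm' ysY svd1 ht1).
- exact: (d_SVD_unembedding_le M_gt0 adm adm' xsX svd2 ht2).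
Qed.
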